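(* Let $H$ be an abelian group with an alternating $\mathbb{Z}$-bilinear form $\langle-,-\rangle\neq0$. Let $K:\mathbb{Q}[H]\to\mathbb{Q}\otimes_{\mathbb{Z}}H$ be the $\mathbb{Q}$-linear map with $K([x])=1\otimes x$, and $\mathfrak g_K=\ker K$ (a Lie subalgebra of $\mathbb{Q}[H]$). Then the composition \[ H_2(\mathfrak g_K)\longrightarrow H_2(\mathbb{Q}[H])\longrightarrow H_2(\mathbb{Q}[H^{(1)}]) \] is surjective, where the first map is induced by the inclusion $\mathfrak g_K\hookrightarrow\mathbb{Q}[H]$ and the second is induced by the projection $\varpi^{(1)}:\mathbb{Q}[H]=\mathbb{Q}[\ker\mu]\oplus\mathbb{Q}[H^{(1)}]\to\mathbb{Q}[H^{(1)}]$.
   Context: $\mu:H\to\mathrm{Hom}_{\mathbb{Z}}(H,\mathbb{Z})$, $\mu(x)(y)=\langle x,y\rangle$; $H^{(1)}:=H\setminus\ker\mu$. $\mathbb{Q}[S]$ ($S\subset H$) is the $\mathbb{Q}$-vector space with basis symbols $[x]$, $x\in S$ (note $c[x]\ne[cx]$); $\mathbb{Q}[H]$ is a Lie algebra via $[[x],[y]]=\langle x,y\rangle[x+y]$, $\mathbb{Q}[\ker\mu]$ is its center and $\mathbb{Q}[H^{(1)}]$ its derived subalgebra, and $\varpi^{(1)}$ is a Lie algebra homomorphism. $H_2$ denotes Lie algebra homology with trivial coefficients $\mathbb{Q}$ (Chevalley–Eilenberg complex). *)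

From HB Require Import structures.
From mathcomp Require Import all_boot all_order all_algebra.
Set Implicit Arguments. Unset Strict Implicit. Unset Printing Implicit Defensive.
Import GRing.Theory.
Local Open Scope ring_scope.

Section LieDefs.
Variable H : zmodType.

Definition alt_bilinear (f : H -> H -> int) : Prop :=
  [/\ (forall x y z, f (x + y) z = f x z + f y z),
      (forall x y z, f x (y + z) = f x y + f x z) &
      (forall x, f x x = 0)].

(* Elements of Q[H]: finite formal Q-linear combinations sum a_i [x_i],
   given as lists of pairs (a_i, x_i); two lists denote the same element
   iff they have the same coefficient function [coef]. *)
Definition fsum := seq (rat * H).

Definition coef (u : fsum) (z : H) : rat := \sum_(p <- u | p.2 == z) p.1.

Definition scale (r : rat) (u : fsum) : fsum := [seq (r * p.1, p.2) | p <- u].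

Definition br (f : H -> H -> int) (u v : fsum) : fsum :=
  [seq (p.1 * q.1 * (f p.2 q.2)%:~R, p.2 + q.2) | p <- u, q <- v].

(* u lies in g_K = ker K, K([x]) = 1 (x) x in Q (x)_Z H:  the tensor
   sum_i a_i (x) x_i vanishes, i.e. (universal property of the tensor
   product) every Z-bilinear map out of Q x H kills it. *)
Definition in_gK (u : fsum) : Prop :=
  forall (A : zmodType) (b : rat -> H -> A),
    (forall a a' x, b (a + a') x = b a x + b a' x) ->
    (forall a x y, b a (x + y) = b a x + b a y) ->
    \sum_(p <- u) b p.1 p.2 = 0.

Definition in_kermu (f : H -> H -> int) (z : H) : Prop := forall y, f z y = 0.

Definition in_QH1 (f : H -> H -> int) (u : fsum) : Prop :=
  forall z, in_kermu f z -> coef u z = 0.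

(* 2-chains: lists of pairs (u_i, v_i) standing for sum_i u_i /\ v_i.
   Lambda^2 of the free vector space on a basis S is identified with
   alternating finitely supported functions on S x S via the coordinate
   of [s] /\ [t]: *)
Definition w2 (c : seq (fsum * fsum)) (s t : H) : rat :=
  \sum_(p <- c) (coef p.1 s * coef p.2 t - coef p.1 t * coef p.2 s).

(* Chevalley-Eilenberg differential d(u /\ v) = -[u,v]; c is a cycle iff
   sum_i [u_i, v_i] = 0. *)
Definition is_cycle (f : H -> H -> int) (c : seq (fsum * fsum)) : Prop :=
  forall z, coef (flatten [seq br f p.1 p.2 | p <- c]) z = 0.

Definition d3 (f : H -> H -> int) (t : fsum * fsum * fsum) : seq (fsum * fsum) :=
  let: (x, y, z) := t in
  [:: (br f x y, scale (-1) z); (br f x z, y); (br f y z, scale (-1) x)].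

Definition d3s (f : H -> H -> int) (ts : seq (fsum * fsum * fsum)) :
  seq (fsum * fsum) := flatten [seq d3 f t | t <- ts].

End LieDefs.

From mathcomp Require Import all_boot all_order all_algebra.
From mathcomp Require Import ring lra zify.
From Stdlib Require Import ClassicalEpsilon Classical.
Set Implicit Arguments. Unset Strict Implicit. Unset Printing Implicit Defensive.
Import GRing.Theory.
Local Open Scope ring_scope.

(* The Lie algebra Q[H] is graded by H and so is its Chevalley-Eilenberg
   complex.  In a weight g outside ker mu, boundaries of 3-chains of
   Q[H^(1)] identify all the wedges [x] /\ [g - x] up to scalars:
   f(r,g) [x] /\ [g-x] is homologous to f(x,g) [r] /\ [g-r].  Hence, modulo
   boundaries, a term l [x] /\ [y] of noncentral weight only depends on its
   bracket l f(x,y) [x+y], and the terms of a cycle cancel.  A term of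
   central weight x + y is realized inside g_K by
     u /\ v,  u = -(l/2)([x] + [y] - [x+y]),  v = 2[x] - [2x],
   which has vanishing bracket and whose noncentral part is
   l [x] /\ [y] + (l/2)[x] /\ [2x] + (l/2)[y] /\ [2x]; the last two wedges
   have weights 3x and y + 2x, in which they have zero bracket, so they are
   boundaries. *)

Lemma additive0 (R A B : zmodType) (b : R -> B -> A) :
  (forall a a' x, b (a + a') x = b a x + b a' x) -> forall x, b 0 x = 0.
Proof. by move=> bD x; apply: (addrI (b 0 x)); rewrite -bD !addr0. Qed.

Lemma additiveN (R A B : zmodType) (b : R -> B -> A) :
  (forall a a' x, b (a + a') x = b a x + b a' x) -> forall a x, b (- a) x = - b a x.
Proof. by move=> bD a x; apply/eqP; rewrite -addr_eq0 -bD addNr (additive0 bD). Qed.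

Lemma foldr_and_mem (T : eqType) (P : T -> Prop) (s : seq T) :
  foldr (fun t Q => P t /\ Q) True s -> forall u, u \in s -> P u.
Proof.
elim: s => [//|t s IHs] /= [Pt Ps] u; rewrite inE => /orP [/eqP -> //|]; exact: IHs.
Qed.

Section Coordinates.
Variable H : zmodType.

Definition kdelta (z s : H) : rat := (z == s)%:R.

(* the coordinate of [u] /\ [v] at [s] /\ [t] *)
Definition wedge (u v s t : H) : rat :=
  kdelta u s * kdelta v t - kdelta u t * kdelta v s.

Lemma wedgeC u v s t : wedge u v s t = - wedge v u s t.
Proof. by rewrite /wedge; ring. Qed.

Lemma coef_nil (z : H) : coef [::] z = 0.
Proof. by rewrite /coef big_nil. Qed.

Lemma coef_cons l (x : H) u z : coef ((l, x) :: u) z = l * kdelta x z + coef u z.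
Proof. by rewrite /coef big_cons /= /kdelta; case: eqP; rewrite ?mulr1 ?mulr0 ?add0r. Qed.

Lemma coefE (u : fsum H) z : coef u z = \sum_(a <- u) a.1 * kdelta a.2 z.
Proof.
elim: u => [|[l x] u IHu]; first by rewrite coef_nil big_nil.
by rewrite coef_cons big_cons IHu.
Qed.

Lemma w2_nil (s t : H) : w2 [::] s t = 0.
Proof. by rewrite /w2 big_nil. Qed.

Lemma w2_cons p c (s t : H) : w2 (p :: c) s t =
  coef p.1 s * coef p.2 t - coef p.1 t * coef p.2 s + w2 c s t.
Proof. by rewrite /w2 big_cons. Qed.

Lemma w2_cat c1 c2 (s t : H) : w2 (c1 ++ c2) s t = w2 c1 s t + w2 c2 s t.
Proof. by rewrite /w2 big_cat. Qed.

Definition wedge_terms (c : seq (fsum H * fsum H)) : seq (rat * H * H) :=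
  flatten [seq [seq (a.1 * b.1, a.2, b.2) | a <- p.1, b <- p.2] | p <- c].

Definition wedge_sum (T : seq (rat * H * H)) (s t : H) : rat :=
  \sum_(k <- T) k.1.1 * wedge k.1.2 k.2 s t.

Lemma w2_wedge_terms c s t : w2 c s t = wedge_sum (wedge_terms c) s t.
Proof.
rewrite /w2 /wedge_sum /wedge_terms big_flatten big_map; apply: eq_bigr => p _.
rewrite big_flatten big_map.
under eq_bigr => a _ do rewrite big_map.
rewrite !coefE !big_distrlr -sumrB; apply: eq_bigr => a _ /=.
by rewrite -sumrB; apply: eq_bigr => b _ /=; rewrite /wedge; ring.
Qed.

End Coordinates.

Section Chains.
Variables (H : zmodType) (f : H -> H -> int).

Definition wedge3 (l : rat) (a b c : H) : fsum H * fsum H * fsum H :=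
  ([:: (l, a)], [:: (1, b)], [:: (1, c)]).

Lemma w2_d3_wedge3 l a b c s t : w2 (d3 f (wedge3 l a b c)) s t =
  l * (- (f a b)%:~R * wedge (a + b) c s t + (f a c)%:~R * wedge (a + c) b s t
       - (f b c)%:~R * wedge (b + c) a s t).
Proof. by rewrite /d3 /wedge3 /br /scale /= !w2_cons w2_nil /= !coef_cons !coef_nil /wedge; ring. Qed.

Lemma w2_d3s_nil s t : w2 (d3s f [::]) s t = 0.
Proof. exact: w2_nil. Qed.

Lemma w2_d3s_cons u ts s t : w2 (d3s f (u :: ts)) s t = w2 (d3 f u) s t + w2 (d3s f ts) s t.
Proof. exact: w2_cat. Qed.

Lemma d3s_cat ts1 ts2 : d3s f (ts1 ++ ts2) = d3s f ts1 ++ d3s f ts2.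
Proof. by rewrite /d3s map_cat flatten_cat. Qed.

Lemma coef_br_wedge_terms c z : coef (flatten [seq br f p.1 p.2 | p <- c]) z =
  \sum_(k <- wedge_terms c) k.1.1 * (f k.1.2 k.2)%:~R * kdelta (k.1.2 + k.2) z.
Proof.
rewrite coefE /wedge_terms !big_flatten !big_map; apply: eq_bigr => p _.
rewrite /br !big_flatten !big_map; apply: eq_bigr => a _.
by rewrite !big_map; apply: eq_bigr.
Qed.

Definition null_bracket (p : fsum H * fsum H) := forall q, q \in br f p.1 p.2 -> q.1 = 0.

Lemma is_cycle_null_bracket c : (forall p, p \in c -> null_bracket p) -> is_cycle f c.
Proof.
move=> c0 z; rewrite coefE big1_seq // => q /andP [_ /flattenP [r /mapP [p pc ->] qr]].
by rewrite (c0 p pc q qr) mul0r.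
Qed.

Definition in_QH1_3 (u : fsum H * fsum H * fsum H) :=
  [/\ in_QH1 f u.1.1, in_QH1 f u.1.2 & in_QH1 f u.2].

Lemma in_QH1_single l z : ~ in_kermu f z -> in_QH1 f [:: (l, z)].
Proof.
move=> nz w kw; rewrite coef_cons coef_nil addr0 /kdelta.
by case: eqP => [e|_]; [case: nz; rewrite e | rewrite mulr0].
Qed.

Lemma not_kermu_form z w : f z w != 0 -> ~ in_kermu f z.
Proof. by move=> fzw kz; move: fzw; rewrite kz. Qed.

Lemma kdelta_kermu z w : in_kermu f z -> ~ in_kermu f w -> kdelta z w = 0.
Proof. by move=> kz nw; rewrite /kdelta; case: eqP => // e; case: nw; rewrite -e. Qed.

Hypothesis hf : alt_bilinear f.

Lemma formDl x y z : f (x + y) z = f x z + f y z.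
Proof. by case: hf. Qed.

Lemma formDr x y z : f x (y + z) = f x y + f x z.
Proof. by case: hf. Qed.

Lemma formxx x : f x x = 0.
Proof. by case: hf. Qed.

Lemma formNl x y : f (- x) y = - f x y.
Proof. exact: (additiveN formDl). Qed.

Lemma formNr x y : f y (- x) = - f y x.
Proof. exact: (additiveN (b := fun a b => f b a) (fun a a' b => formDr b a a')). Qed.

Lemma formC x y : f y x = - f x y.
Proof.
by apply/eqP; rewrite -addr_eq0; have := formxx (x + y);
  rewrite formDl !formDr !formxx add0r addr0 addrC => ->.
Qed.

Local Ltac expand_form := rewrite ?(formDl, formDr, formNl, formNr) ?formxx.

Definition wedge_wt (g z s t : H) : rat := wedge z (g - z) s t.

Lemma wedge_wt_subl g z s t : wedge_wt g (g - z) s t = - wedge_wt g z s t.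
Proof. by rewrite /wedge_wt subKr wedgeC. Qed.

Lemma wedge_wt_addl g z s t : wedge_wt g (g + z) s t = - wedge_wt g (- z) s t.
Proof. by rewrite -(opprK z) wedge_wt_subl opprK. Qed.

Lemma w2_d3_wedge3_wt l a b c g s t : a + b + c = g ->
  w2 (d3 f (wedge3 l a b c)) s t =
  l * ((f b c)%:~R * wedge_wt g a s t + (f c a)%:~R * wedge_wt g b s t
       + (f a b)%:~R * wedge_wt g c s t).
Proof.
move=> <-; rewrite w2_d3_wedge3 /wedge_wt.
have -> : a + b + c - c = a + b by rewrite addrK.
have -> : a + b + c - b = a + c by rewrite addrAC addrK.
have -> : a + b + c - a = b + c by rewrite -(addrA a b c) (addrC a) addrK.
by rewrite (wedgeC (a + b)) (wedgeC (a + c)) (wedgeC (b + c)) (formC a c) intrN; ring.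
Qed.

Lemma w2_d3_wedge3_sub l g z r s t : w2 (d3 f (wedge3 l z r (g - (z + r)))) s t =
  l * ((f r (g - (z + r)))%:~R * wedge_wt g z s t
       + (f (g - (z + r)) z)%:~R * wedge_wt g r s t - (f z r)%:~R * wedge_wt g (z + r) s t).
Proof. by rewrite (@w2_d3_wedge3_wt _ _ _ _ g) ?wedge_wt_subl; [ring | rewrite addrC subrK]. Qed.

Lemma w2_d3_wedge3_add l g z r s t : w2 (d3 f (wedge3 l (- (z + r)) r (g + z))) s t =
  l * ((f r (g + z))%:~R * wedge_wt g (- (z + r)) s t
       + (f (g + z) (- (z + r)))%:~R * wedge_wt g r s t
       - (f (- (z + r)) r)%:~R * wedge_wt g (- z) s t).
Proof.
rewrite (@w2_d3_wedge3_wt _ _ _ _ g) ?wedge_wt_addl; first by ring.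
by rewrite opprD subrK addrCA addNr addr0.
Qed.

Lemma w2_d3_wedge3_opp l g z s t : w2 (d3 f (wedge3 l z (- z) g)) s t =
  l * ((f (- z) g)%:~R * wedge_wt g z s t + (f g z)%:~R * wedge_wt g (- z) s t).
Proof. by rewrite (@w2_d3_wedge3_wt _ _ _ _ g) ?formNr ?formxx; [ring | rewrite subrr add0r]. Qed.

(* Three explicit 3-chains of Q[H^(1)] whose boundary exchanges [x] /\ [g-x]
   for a multiple of [r] /\ [g-r].  Write A = f x g, B = f r g, C = f x r;
   each case avoids dividing by a vanishing combination of A and B. *)
Definition exchange_gen (mu : rat) (g r x : H) : seq (fsum H * fsum H * fsum H) :=
  let A : rat := (f x g)%:~R in let B : rat := (f r g)%:~R in
  let C : rat := (f x r)%:~R in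
  [:: wedge3 (mu * (C - B) / B ^+ 2) x r (g - (x + r));
      wedge3 (mu * C / B ^+ 2) (- (x + r)) r (g + x);
      wedge3 (mu * C * (B - C) / (B ^+ 2 * (A + B))) (x + r) (- (x + r)) g;
      wedge3 (mu * C * C / (B ^+ 2 * A)) x (- x) g].

Definition exchange_opp (mu : rat) (g r x : H) : seq (fsum H * fsum H * fsum H) :=
  let A : rat := (f x g)%:~R in let B : rat := (f r g)%:~R in
  let C : rat := (f x r)%:~R in
  let l1 := mu * (B + C) / B ^+ 2 in
  [:: wedge3 l1 (- ((x - r) + r)) r (g + (x - r));
      wedge3 (l1 * (B - C) / A) x (- x) g;
      wedge3 (l1 * C / (A - B)) (x - r) (- (x - r)) g;
      wedge3 (mu * C / B ^+ 2) (x - r) r (g - ((x - r) + r))].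

Definition exchange_orth (mu : rat) (g r x : H) : seq (fsum H * fsum H * fsum H) :=
  let B : rat := (f r g)%:~R in let C : rat := (f x r)%:~R in
  let k := mu * C / B ^+ 3 in let k' := - mu * (B + C) / B ^+ 3 in
  [:: wedge3 (- mu / B) x r (g - (x + r));
      wedge3 (- mu / B) (x - r) r (g - ((x - r) + r));
      wedge3 (k * (C - B)) (x + r) r (g - ((x + r) + r));
      wedge3 (k * C) (- ((x + r) + r)) r (g + (x + r));
      wedge3 (k * C * (B - C) / (B + B)) ((x + r) + r) (- ((x + r) + r)) g;
      wedge3 (k * C * C / B) (x + r) (- (x + r)) g;
      wedge3 (k' * (B + C)) (- ((x - r - r) + r)) r (g + (x - r - r));
      wedge3 (k' * (B + C) * (B - C) / (- B)) (x - r) (- (x - r)) g;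
      wedge3 (k' * (B + C) * C / (- (B + B))) (x - r - r) (- (x - r - r)) g;
      wedge3 (k' * C) (x - r - r) r (g - ((x - r - r) + r))].

Definition exchange mu g r x :=
  if f x g == 0 then exchange_orth mu g r x
  else if f x g + f r g != 0 then exchange_gen mu g r x else exchange_opp mu g r x.

Local Ltac w2_d3s_wedge3 x r g :=
  rewrite !w2_d3s_cons w2_d3s_nil ?w2_d3_wedge3_sub ?w2_d3_wedge3_add ?w2_d3_wedge3_opp
          ?subrK; expand_form; rewrite ?(formC x r) ?(formC x g) ?(formC r g) ?formxx.

Lemma w2_d3s_exchange mu g r x s t : f r g != 0 ->
  w2 (d3s f (exchange mu g r x)) s t =
  mu * ((f x g)%:~R / (f r g)%:~R * wedge_wt g r s t - wedge_wt g x s t).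
Proof.
move=> B0; have B0' : (f r g)%:~R != 0 :> rat by rewrite intr_eq0.
rewrite /exchange; case: eqP => [A0|/eqP A0].
  have BB0 : (f r g)%:~R + (f r g)%:~R != 0 :> rat.
    by rewrite -mulr2n -mulr_natl mulf_eq0 negb_or B0' andbT.
  rewrite /exchange_orth; w2_d3s_wedge3 x r g; rewrite A0 ?(intrD, intrN).
  by field; rewrite ?B0' ?BB0.
have A0' : (f x g)%:~R != 0 :> rat by rewrite intr_eq0.
case: ifP => [AB0|/negbFE AB0].
  have AB0' : (f x g)%:~R + (f r g)%:~R != 0 :> rat by rewrite -intrD intr_eq0.
  rewrite /exchange_gen; w2_d3s_wedge3 x r g; rewrite ?(intrD, intrN).
  by field; rewrite ?B0' ?A0' ?AB0'.
have AB0' : (f x g)%:~R - (f r g)%:~R != 0 :> rat.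
  by rewrite -intrN -intrD intr_eq0; move: AB0 B0; lia.
rewrite /exchange_opp; w2_d3s_wedge3 x r g; rewrite ?(intrD, intrN).
by field; rewrite ?B0' ?A0' ?AB0'.
Qed.

Local Ltac not_kermu_via g :=
  apply: (@not_kermu_form _ g); expand_form; rewrite ?(formC _ g) ?formxx; lia.

Lemma exchange_QH1 mu g r x : f r g != 0 -> ~ in_kermu f x -> ~ in_kermu f (g - x) ->
  forall u, u \in exchange mu g r x -> in_QH1_3 u.
Proof.
move=> B0 nx ny; rewrite /exchange.
have ng : ~ in_kermu f g by apply: (@not_kermu_form _ r); rewrite formC oppr_eq0.
case: eqP => [A0|/eqP A0]; [rewrite /exchange_orth | case: ifP => [AB0|/negbFE AB0];
  [rewrite /exchange_gen | rewrite /exchange_opp]];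
  apply: foldr_and_mem => /=; repeat split; apply: in_QH1_single;
  rewrite ?subrK //; not_kermu_via g.
Qed.

(* junk if g is central *)
Definition pivot (g : H) : H := epsilon (inhabits 0) (fun r => f r g != 0).

Lemma pivotP g : ~ in_kermu f g -> f (pivot g) g != 0.
Proof.
move=> ng; apply: (epsilon_spec (inhabits 0) (fun r => f r g != 0)).
have [y fgy] := not_all_ex_not _ _ ng.
by exists y; rewrite formC oppr_eq0; apply/eqP.
Qed.

(* Modulo boundaries, [x] /\ [g - x] equals f(x,g) times this normal form
   (which is 0 for central g, since then the division is by 0). *)
Definition wedge_normal (g s t : H) : rat :=
  wedge_wt g (pivot g) s t / (f (pivot g) g)%:~R.

Lemma wedge_normal_weight g s t :
  wedge_normal g s t = (g == s + t)%:R * wedge_normal (s + t) s t.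
Proof.
case: eqP => [-> | gst]; first by rewrite mul1r.
rewrite mul0r /wedge_normal /wedge_wt /wedge /kdelta.
have st : (pivot g == s) && (g - pivot g == t) = false.
  by apply/negP => /andP [/eqP ps /eqP pt]; apply: gst; rewrite -ps -pt addrC subrK.
have ts : (pivot g == t) && (g - pivot g == s) = false.
  by apply/negP => /andP [/eqP pt /eqP ps]; apply: gst; rewrite -pt -ps subrK.
move: st ts; case: (pivot g == s); case: (g - pivot g == t); case: (pivot g == t);
  by case: (g - pivot g == s) => //= _ _; rewrite ?(mul0r, mulr0, mulr1, mul1r, subrr, subr0).
Qed.

Definition normal_sum (T : seq (rat * H * H)) (s t : H) : rat :=
  \sum_(k <- T) k.1.1 * (f k.1.2 k.2)%:~R * wedge_normal (k.1.2 + k.2) s t.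

Lemma normal_sum_cycle c s t : is_cycle f c -> normal_sum (wedge_terms c) s t = 0.
Proof.
move=> cc; have := cc (s + t); rewrite coef_br_wedge_terms => c0.
rewrite /normal_sum (eq_bigr (fun k => k.1.1 * (f k.1.2 k.2)%:~R * kdelta (k.1.2 + k.2) (s + t)
                                       * wedge_normal (s + t) s t)); last first.
  by move=> k _; rewrite wedge_normal_weight /kdelta mulrA.
by rewrite -mulr_suml c0 mul0r.
Qed.

Definition lifts_terms (T : seq (rat * H * H)) (c' : seq (fsum H * fsum H))
    (ts : seq (fsum H * fsum H * fsum H)) :=
  [/\ forall p, p \in c' -> [/\ in_gK p.1, in_gK p.2 & null_bracket p],
      forall u, u \in ts -> in_QH1_3 u &
      forall s t, ~ in_kermu f s -> ~ in_kermu f t ->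
        w2 c' s t - wedge_sum T s t = w2 (d3s f ts) s t - normal_sum T s t].

Lemma lifts_terms_cat T1 T2 c1 c2 ts1 ts2 :
  lifts_terms T1 c1 ts1 -> lifts_terms T2 c2 ts2 ->
  lifts_terms (T1 ++ T2) (c1 ++ c2) (ts1 ++ ts2).
Proof.
move=> [c1P ts1P w1] [c2P ts2P w2e]; split.
- by move=> p; rewrite mem_cat => /orP [] ?; [exact: c1P | exact: c2P].
- by move=> u; rewrite mem_cat => /orP [] ?; [exact: ts1P | exact: ts2P].
move=> s t ns nt; rewrite d3s_cat !w2_cat /wedge_sum /normal_sum !big_cat /=.
by have := w1 s t ns nt; have := w2e s t ns nt; rewrite /wedge_sum /normal_sum; lra.
Qed.

Lemma lifts_term_kermu_factor l x y : in_kermu f x \/ in_kermu f y ->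
  lifts_terms [:: (l, x, y)] [::] [::].
Proof.
move=> kxy; split=> // s t ns nt; rewrite /wedge_sum /normal_sum !big_seq1 /= ?w2_d3s_nil ?w2_nil.
have -> : f x y = 0 by case: kxy => [kx | ky]; [exact: kx | rewrite formC ky oppr0].
have -> : wedge x y s t = 0.
  by case: kxy => k; rewrite /wedge (kdelta_kermu k ns) (kdelta_kermu k nt); ring.
by rewrite mulr0 mul0r subrr.
Qed.

Definition central_lift (l : rat) (x y : H) : fsum H * fsum H :=
  ([:: (- (l / 2), x); (- (l / 2), y); (l / 2, x + y)], [:: (1 + 1, x); (-1, x + x)]).

Lemma central_lift_gK l x y : in_gK (central_lift l x y).1 /\ in_gK (central_lift l x y).2.
Proof.
split=> A b bDl bDr; rewrite /= !big_cons big_nil.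
  by rewrite bDr !(additiveN bDl) addr0 addrA addrACA !addNr addr0.
by rewrite bDl bDr !(additiveN bDl) addr0 addrACA !subrr addr0.
Qed.

Lemma central_lift_null_bracket l x y : in_kermu f (x + y) ->
  null_bracket (central_lift l x y).
Proof.
move=> kxy q; rewrite /br /= !inE.
have fyx : f y x = 0 by have := kxy x; rewrite formDl formxx add0r.
have fxy : f x y = 0 by rewrite formC fyx oppr0.
rewrite !kxy !formDr !formxx ?fyx ?fxy !addr0 !mulr0.
by do ![case/orP=> [/eqP -> //|]]; move/eqP=> ->.
Qed.

Lemma lifts_term_kermu_weight l x y : ~ in_kermu f x -> ~ in_kermu f y ->
  in_kermu f (x + y) ->
  let g1 := x + (x + x) in let g2 := y + (x + x) in
  lifts_terms [:: (l, x, y)] [:: central_lift l x y]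
    (exchange (- (l / 2)) g1 (pivot g1) x ++ exchange (- (l / 2)) g2 (pivot g2) y).
Proof.
move=> nx ny kxy g1 g2.
have fyx : f y x = 0 by have := kxy x; rewrite formDl formxx add0r.
have fxy : f x y = 0 by rewrite formC fyx oppr0.
have ng1 : ~ in_kermu f g1.
  by move=> k; apply: nx => w; have := k w; rewrite /g1 !formDl; lia.
have ng2 : ~ in_kermu f g2.
  by move=> k; apply: nx => w; have := k w; have := kxy w; rewrite /g2 !formDl; lia.
have nxx : ~ in_kermu f (x + x).
  by move=> k; apply: nx => w; have := k w; rewrite !formDl; lia.
have g1x : g1 - x = x + x by rewrite /g1 addrC addKr.
have g2y : g2 - y = x + x by rewrite /g2 addrC addKr.
split.
- by move=> p; rewrite inE => /eqP ->; have [] := central_lift_gK l x y;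
    split=> //; exact: central_lift_null_bracket.
- move=> u; rewrite mem_cat => /orP [] hu.
    by apply: (exchange_QH1 (pivotP ng1) nx _ hu); rewrite g1x.
  by apply: (exchange_QH1 (pivotP ng2) ny _ hu); rewrite g2y.
move=> s t ns nt.
rewrite /wedge_sum /normal_sum !big_seq1 /= d3s_cat w2_cat !w2_d3s_exchange ?pivotP //.
rewrite /wedge_wt g1x g2y fxy.
have -> : f x g1 = 0 by rewrite /g1 !formDr !formxx !addr0.
have -> : f y g2 = 0 by rewrite /g2 !formDr !formxx fyx !addr0.
rewrite w2_cons w2_nil /= !coef_cons !coef_nil !(kdelta_kermu kxy) // /wedge.
by rewrite mulr0z mul0r; field; rewrite ?intr_eq0 ?pivotP.
Qed.

Lemma lifts_term_weight l x y : ~ in_kermu f x -> ~ in_kermu f y ->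
  ~ in_kermu f (x + y) ->
  lifts_terms [:: (l, x, y)] [::] (exchange l (x + y) (pivot (x + y)) x).
Proof.
move=> nx ny nxy; have yx : x + y - x = y by rewrite addrC addKr.
split=> //; first by move=> u hu; apply: (exchange_QH1 (pivotP nxy) nx _ hu); rewrite yx.
move=> s t ns nt.
rewrite /wedge_sum /normal_sum !big_seq1 /= w2_nil w2_d3s_exchange ?pivotP //.
rewrite /wedge_normal /wedge_wt yx.
have -> : f x (x + y) = f x y by rewrite formDr formxx add0r.
by ring.
Qed.

Lemma lifts_terms_exists T : exists c' ts, lifts_terms T c' ts.
Proof.
elim: T => [|[[l x] y] T [c' [ts IHT]]].
  by exists [::], [::]; split=> // s t _ _; rewrite ?w2_d3s_nil ?w2_nil /wedge_sum /normal_sum !big_nil.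
suff [c1 [ts1 lift1]] : exists c1 ts1, lifts_terms [:: (l, x, y)] c1 ts1.
  by exists (c1 ++ c'), (ts1 ++ ts); exact: (lifts_terms_cat lift1 IHT).
have [kxy|/not_or_and [nx ny]] := classic (in_kermu f x \/ in_kermu f y).
  by exists [::], [::]; exact: lifts_term_kermu_factor.
have [kxy|nxy] := classic (in_kermu f (x + y)).
  by eexists _, _; exact: lifts_term_kermu_weight.
by eexists _, _; exact: lifts_term_weight.
Qed.

End Chains.

Theorem theorem5p1 (H : zmodType) (f : H -> H -> int) :
  alt_bilinear f ->
  (exists x y, f x y != 0) ->
  forall c : seq (fsum H * fsum H),
    (forall p, p \in c -> in_QH1 f p.1 /\ in_QH1 f p.2) ->
    is_cycle f c ->
    exists c' : seq (fsum H * fsum H),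
      [/\ (forall p, p \in c' -> in_gK p.1 /\ in_gK p.2),
          is_cycle f c' &
          exists ts : seq (fsum H * fsum H * fsum H),
            (forall t, t \in ts ->
               [/\ in_QH1 f t.1.1, in_QH1 f t.1.2 & in_QH1 f t.2]) /\
            (forall s t, ~ in_kermu f s -> ~ in_kermu f t ->
               w2 c' s t - w2 c s t = w2 (d3s f ts) s t)].
Proof.
move=> hf _ c _ cc.
have [c' [ts [c'P tsP w2c']]] := lifts_terms_exists hf (wedge_terms c).
exists c'; split.
- by move=> p /c'P [].
- by apply: is_cycle_null_bracket => p /c'P [].
exists ts; split; first exact: tsP.
by move=> s t ns nt; rewrite (w2_wedge_terms c) w2c' // normal_sum_cycle // subr0.
Qed.
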